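(* Let $\mathbb{L}/\mathbb{K}$ be a finite Galois extension with Galois group $G$ and let $\mathcal{A},\mathcal{B},\mathcal{C}\subseteq\mathbb{L}[G]$ be $\mathbb{L}$-linear codes with $\mathcal{B}\circ\mathcal{A}\subseteq\mathcal{C}^\perp$. Let $r=c+e$ with $c\in\mathcal{C}$, $e\in\mathbb{L}[G]$, and let $I=\mathrm{supp}(e)$. Then (1) $\mathcal{K}(r)=\mathcal{K}(e)$; (2) $\mathrm{Short}_I(\mathcal{A})\subseteq\mathcal{K}(e)$; (3) if $\mathrm{rk}_\mathbb{K}(e)<d(\mathcal{B}^\perp)$, then $\mathrm{Short}_I(\mathcal{A})=\mathcal{K}(e)$.
   Context: $\mathbb{L}[G]$ has composition product $(ag)\circ(bh)=(a\,g(b))(gh)$; $a=\sum a_gg$ acts on $\mathbb{L}$ as $x\mapsto\sum a_gg(x)$, with kernel $\ker(a)\subseteq\mathbb{L}$ and rank $\mathrm{rk}_\mathbb{K}(a)$. A code is an $\mathbb{L}$-subspace of $\mathbb{L}[G]$; its minimum distance $d(\mathcal{D})$ is the minimum of $\mathrm{rk}_\mathbb{K}(x)$ over nonzero $x\in\mathcal{D}$. $\langle\sum a_gg,\sum b_gg\rangle_{\mathbb{L}[G]}=\sum a_gb_g$ and $\mathcal{D}^\perp$ is the orthogonal for this form. $\mathcal{B}\circ\mathcal{A}=\mathrm{span}_\mathbb{L}\{b\circ a:a\in\mathcal{A},b\in\mathcal{B}\}$. The support $\mathrm{supp}(a)$ is the orthogonal of $\ker(a)$ in $\mathbb{L}$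 with respect to $(x,y)\mapsto\mathrm{Tr}_{\mathbb{L}/\mathbb{K}}(xy)$. For a $\mathbb{K}$-subspace $I\subseteq\mathbb{L}$, $\mathrm{Short}_I(\mathcal{A})=\{a\in\mathcal{A}: I\subseteq\ker(a)\}$. For $x\in\mathbb{L}[G]$, $\mathcal{K}(x)=\{a\in\mathcal{A}:\langle b\circ a,x\rangle_{\mathbb{L}[G]}=0\ \forall b\in\mathcal{B}\}$. *)

From HB Require Import structures.
From mathcomp Require Import all_boot all_order all_algebra all_fingroup all_field.
Set Implicit Arguments. Unset Strict Implicit. Unset Printing Implicit Defensive.
Import GRing.Theory.
Local Open Scope ring_scope.

(* Setting: K = the base field F, L : splittingFieldType F with galois 1 {:L};
   G = gal_of {:L} = 'Gal({:L} / 1) (all F-automorphisms of L). *)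

Section SkewGroupAlgebra.
Variables (F : fieldType) (L : splittingFieldType F).

Definition Gal := gal_of (fullv : {vspace L}).

(* L[G] = functions G -> L, as an L-vector space (L acting on itself) *)
Definition LG := {ffun Gal -> L^o}.

(* composition product: (a g) o (b h) = (a g(b)) (g o h); with mathcomp's
   convention (x * y)%g z = y (x z), g o h is (h * g)%g. *)
Definition skew_comp (a b : LG) : LG :=
  [ffun k : Gal => \sum_(g : Gal) \sum_(h : Gal | (h * g)%g == k)
                     (a g : L) * g (b h : L)].

Definition skew_act (a : LG) : 'End(L) :=
  (\sum_(g : Gal) (amull (a g : L) \o (g : 'End(L))))%VF.

Definition skew_ker (a : LG) : {vspace L} := lker (skew_act a).
Definition skew_rk (a : LG) : nat := \dim (limg (skew_act a)).

Definition skew_inner (a b : LG) : L := \sum_(g : Gal) (a g : L) * (b g : L).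

Definition in_dual (D : {vspace LG}) (x : LG) : Prop :=
  forall y, y \in D -> skew_inner y x = 0.

(* n < d(D) : every nonzero codeword of D has rank > n
   (d(D) = +infinity when D = 0) *)
Definition lt_mindist (n : nat) (P : LG -> Prop) : Prop :=
  forall x, P x -> x != 0 -> (n < skew_rk x)%N.

(* supp(a) = orthogonal of ker(a) for the trace form (x,y) |-> Tr_{L/K}(xy) *)
Definition in_supp (a : LG) (x : L) : Prop :=
  forall y, y \in skew_ker a -> galTrace 1%VS fullv (x * y) = 0.

Definition in_short_supp (e : LG) (A : {vspace LG}) (a : LG) : Prop :=
  a \in A /\ (forall x, in_supp e x -> x \in skew_ker a).

Definition in_Kset (A B : {vspace LG}) (x : LG) (a : LG) : Prop :=
  a \in A /\ (forall b, b \in B -> skew_inner (skew_comp b a) x = 0).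

End SkewGroupAlgebra.

From Pilot Require Import Defs.
From HB Require Import structures.
From mathcomp Require Import all_boot all_order all_algebra all_fingroup all_field.
Import GRing.Theory.
Local Open Scope ring_scope.
Set Implicit Arguments.
Unset Strict Implicit.
Unset Printing Implicit Defensive.

(* Write G for the Galois group of L/K and Tr for the trace
   form (x, y) |-> Tr_{L/K}(x y), which is nondegenerate by Dedekind's
   independence of characters (the same fact makes a |-> (x |-> a(x))
   injective on L[G]).
   - Every a in L[G] has an adjoint a* for the trace form,
     Tr(a(x) z) = Tr(x a*(z)), and the image of e* lies in supp(e).
   - For a, e in L[G] there is a "twisted" element y(a, e) in L[G] with
     <b o a, e> = <b, y(a, e)> for every b, acting on L as e o a*; hence
     rk(y(a, e)) <= rk(e), and y(a, e) = 0 iff a vanishes on supp(e).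
   The theorem follows: (1) <b o a, c> = 0 for c in C, so only e counts;
   (2) if a kills supp(e) then y(a, e) = 0, so a is in K(e); (3) if a is
   in K(e), then y(a, e) lies in the dual of B and has rank at most
   rk(e) < d(B^perp), so it is 0 and a kills supp(e).
   Here G is the group of all automorphisms of L, which all fix the base
   field. *)

Section TraceDuality.
Variables (F : fieldType) (L : splittingFieldType F).
Local Notation G := (Defs.Gal L).
Local Notation Tr := (galTrace 1%VS (fullv : {vspace L})).
Implicit Types (a b e : LG L) (x z : L).

Lemma gal_in_full (g : G) : g \in 'Gal(fullv / 1%VS)%g.
Proof. by rewrite gal_kHom ?sub1v // k1AHom. Qed.

Lemma traceE (u : L) : Tr u = \sum_(g : G) g u.
Proof. by apply: eq_bigl => g; rewrite gal_in_full. Qed.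

Lemma trace_gal (g : G) (u : L) : Tr (g u) = Tr u.
Proof. by rewrite galTrace_gal ?memvf ?gal_in_full. Qed.

Lemma galVK (g : G) (w : L) : g ((g^-1)%g w) = w.
Proof. by rewrite -galM ?memvf // mulVg gal_id. Qed.

Lemma gal_combination_eq0 (k : G -> L) :
  (forall t : L, \sum_(g : G) k g * g t = 0) -> forall g, k g = 0.
Proof. by move=> Hk g; apply: (@gal_independent _ _ fullv predT) => // t _. Qed.

Lemma trace_form_nondeg (w : L) : (forall z, Tr (w * z) = 0) -> w = 0.
Proof.
move=> Hw; have [//|nz_w] := eqVneq w 0.
suff /eqP : (1 : L) = 0 by rewrite oner_eq0.
apply: (@gal_combination_eq0 (fun _ => 1) _ 1%g) => t.
have -> : t = w * (w^-1 * t) by rewrite mulrA mulfV // mul1r.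
by rewrite -[RHS](Hw (w^-1 * t)) traceE; under eq_bigr do rewrite mul1r.
Qed.

Lemma skew_actE a x : skew_act a x = \sum_(g : G) a g * g x.
Proof.
rewrite sum_lfunE; apply: eq_bigr => g _.
by rewrite comp_lfunE lfunE.
Qed.

Lemma skew_act_eq0 a : (forall x, skew_act a x = 0) -> a = 0.
Proof.
move=> Ha; apply/ffunP => g; rewrite ffunE.
by apply: gal_combination_eq0 => t; rewrite -skew_actE.
Qed.

Definition skew_adj a z : L := \sum_(h : G) (h^-1)%g (a h * z).

Lemma skew_adjP a x z : Tr (skew_act a x * z) = Tr (x * skew_adj a z).
Proof.
rewrite skew_actE mulr_suml mulr_sumr !raddf_sum; apply: eq_bigr => h _.
rewrite -[RHS](trace_gal h) rmorphM /= galVK.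
by rewrite mulrA [a h * _]mulrC.
Qed.

Lemma skew_adj_supp e z : in_supp e (skew_adj e z).
Proof.
move=> y; rewrite memv_ker => /eqP e_y0.
by rewrite mulrC -skew_adjP e_y0 mul0r raddf0.
Qed.

Definition twist a e : LG L :=
  [ffun g : G => \sum_(h : G) g (a h) * e (h * g)%g].

Lemma skew_inner_comp_twist a b e :
  skew_inner (skew_comp b a) e = skew_inner b (twist a e).
Proof.
rewrite /skew_inner; under eq_bigr do rewrite ffunE big_distrl /=.
rewrite (@exchange_big _ 0 +%R); apply: eq_bigr => g _.
rewrite ffunE mulr_sumr.
under eq_bigr do rewrite big_distrl big_mkcond /=.
rewrite (@exchange_big _ 0 +%R); apply: eq_bigr => h _.
rewrite -big_mkcond (big_pred1 (h * g)%g) /=; last by move=> k; rewrite eq_sym.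
by rewrite mulrA.
Qed.

Lemma skew_act_twist a e x : skew_act (twist a e) x = skew_act e (skew_adj a x).
Proof.
rewrite !skew_actE /twist /skew_adj.
under eq_bigr do rewrite ffunE mulr_suml.
rewrite (@exchange_big _ 0 +%R).
under [RHS]eq_bigr do rewrite rmorph_sum mulr_sumr /=.
rewrite [RHS](@exchange_big _ 0 +%R); apply: eq_bigr => h _.
rewrite [RHS](reindex_inj (mulgI h)) /=; apply: eq_bigr => g _.
rewrite -galM ?memvf // mulgA mulVg mul1g rmorphM /=.
by rewrite mulrCA mulrA.
Qed.

(* rk(y(a, e)) <= rk(e), since the image of e o a* lies in that of e. *)
Lemma skew_rk_twist a e : (skew_rk (twist a e) <= skew_rk e)%N.
Proof.
apply: dimvS; apply/subvP => _ /memv_imgP[x _ ->].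
by rewrite skew_act_twist memv_img ?memvf.
Qed.

Lemma skew_act0 x : skew_act 0 x = 0.
Proof. by rewrite skew_actE big1 // => g _; rewrite ffunE mul0r. Qed.

Lemma twist_eq0P a e : twist a e = 0 <-> forall x, skew_act e (skew_adj a x) = 0.
Proof.
split=> [y0 x | e_adj0]; first by rewrite -skew_act_twist y0 skew_act0.
by apply: skew_act_eq0 => x; rewrite skew_act_twist.
Qed.

(* a o e* = 0 implies e o a* = 0, as they are adjoint for the trace form. *)
Lemma skew_adj_comp_eq0 a e :
  (forall z, skew_act a (skew_adj e z) = 0) ->
  forall x, skew_act e (skew_adj a x) = 0.
Proof.
move=> ae0 x; apply: trace_form_nondeg => z.
by rewrite skew_adjP mulrC -skew_adjP ae0 mul0r raddf0.
Qed.

Lemma short_supp_twist a e :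
  (forall x, in_supp e x -> x \in skew_ker a) <-> twist a e = 0.
Proof.
split=> [a_supp0 | /twist_eq0P e_adj0 x supp_x].
  apply/twist_eq0P/skew_adj_comp_eq0 => z; apply/eqP; rewrite -memv_ker.
  exact/a_supp0/skew_adj_supp.
rewrite memv_ker; apply/eqP/trace_form_nondeg => z.
by rewrite skew_adjP; apply: supp_x; rewrite memv_ker e_adj0.
Qed.

End TraceDuality.

Section DecodingSets.
Variables (F : fieldType) (L : splittingFieldType F) (A B : {vspace LG L}).
Implicit Types (a b c e : LG L).

Lemma skew_innerC b c : skew_inner b c = skew_inner c b.
Proof. by apply: eq_bigr => g _; rewrite mulrC. Qed.

Lemma skew_innerDr b c e : skew_inner b (c + e) = skew_inner b c + skew_inner b e.
Proof. by rewrite -big_split; apply: eq_bigr => g _; rewrite ffunE mulrDr. Qed.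

Lemma skew_inner0r b : skew_inner b 0 = 0.
Proof. by rewrite /skew_inner big1 // => g _; rewrite ffunE mulr0. Qed.

Lemma Kset_add_codeword (C : {vspace LG L}) c e a :
  (forall a b, a \in A -> b \in B -> in_dual C (skew_comp b a)) -> c \in C ->
  in_Kset A B (c + e) a <-> in_Kset A B e a.
Proof.
move=> BA_dualC Cc.
suff inner_eq b : a \in A -> b \in B ->
    skew_inner (skew_comp b a) (c + e) = skew_inner (skew_comp b a) e.
  split=> -[Aa Ka]; split=> // b Bb.
    by rewrite -(inner_eq b) //; apply: Ka.
  by rewrite (inner_eq b) //; apply: Ka.
move=> Aa Bb; rewrite skew_innerDr skew_innerC.
by rewrite (BA_dualC a b Aa Bb c Cc) add0r.
Qed.

Lemma short_supp_Kset e a : in_short_supp e A a -> in_Kset A B e a.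
Proof.
move=> [Aa /short_supp_twist a_e0]; split=> // b Bb.
by rewrite skew_inner_comp_twist a_e0 skew_inner0r.
Qed.

(* (3) When rk(e) < d(B^perp), K(e) is contained in Short_I(A): for a in K(e)
   the twisted product y(a, e) lies in B^perp and has rank at most rk(e). *)
Lemma Kset_short_supp e a :
  lt_mindist (skew_rk e) (in_dual B) -> in_Kset A B e a -> in_short_supp e A a.
Proof.
move=> rk_lt [Aa Ka]; split=> //; apply/short_supp_twist.
have y_dualB : in_dual B (twist a e).
  by move=> b Bb; rewrite -skew_inner_comp_twist; apply: Ka.
apply/eqP; apply: contraT => y_nz.
by have := rk_lt _ y_dualB y_nz; rewrite ltnNge skew_rk_twist.
Qed.

End DecodingSets.

Unset Implicit Arguments.

Theorem mainTheorem11 (F : fieldType) (L : splittingFieldType F)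
  (HGal : galois 1%VS (fullv : {vspace L}))
  (A B C : {vspace LG L})
  (HBAC : forall a b, a \in A -> b \in B -> in_dual C (skew_comp b a))
  (c e : LG L) (Hc : c \in C) :
  let r := c + e in
  (forall a, in_Kset A B r a <-> in_Kset A B e a) /\
  (forall a, in_short_supp e A a -> in_Kset A B e a) /\
  (lt_mindist (skew_rk e) (in_dual B) ->
     forall a, in_short_supp e A a <-> in_Kset A B e a).
Proof.
move=> r; split; first by move=> a; apply: Kset_add_codeword HBAC Hc.
split=> [a | rk_lt a]; first exact: short_supp_Kset.
by split; [apply: short_supp_Kset | apply: Kset_short_supp].
Qed.
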